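(* Let $q$ be a prime power and $M$ an $n\times n$ matrix over $\mathbb{F}_{q^2}$. Then $\sharp(\mathrm{Num}_0(M))=\sharp(\mathrm{Num}_0(M^\dagger))$, and, if $n\ge 2$, $\sharp(\mathrm{Num}'_0(M))=\sharp(\mathrm{Num}'_0(M^\dagger))$.
   Context: The Hermitian form on $\mathbb{F}_{q^2}^n$ is $\langle u,v\rangle=\sum_i u_i^q v_i$. For $N=(n_{ij})$, $N^\dagger=(n_{ji}^q)$. $\mathrm{Num}_0(M)=\{\langle u,Mu\rangle: u\in\mathbb{F}_{q^2}^n,\ \langle u,u\rangle=0\}$ and, for $n\ge 2$, $\mathrm{Num}'_0(M)=\{\langle u,Mu\rangle: u\in\mathbb{F}_{q^2}^n\setminus\{0\},\ \langle u,u\rangle=0\}$. *)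

From mathcomp Require Import all_boot all_order all_algebra all_field.
Set Implicit Arguments. Unset Strict Implicit. Unset Printing Implicit Defensive.
Import GRing.Theory.
Local Open Scope ring_scope.

(* F is a finite field with q^2 elements (i.e. F = F_{q^2}); vectors are column vectors. *)

Definition herm (F : finFieldType) (q n : nat) (u v : 'cV[F]_n) : F :=
  \sum_(i < n) (u i 0) ^+ q * v i 0.

Definition hdag (F : finFieldType) (q n : nat) (M : 'M[F]_n) : 'M[F]_n :=
  \matrix_(i, j) (M j i) ^+ q.

Definition Num0 (F : finFieldType) (q n : nat) (M : 'M[F]_n) : {set F} :=
  [set herm q u (M *m u) | u in [set u : 'cV[F]_n | herm q u u == 0]].

Definition Num0' (F : finFieldType) (q n : nat) (M : 'M[F]_n) : {set F} :=
  [set herm q u (M *m u) | u in [set u : 'cV[F]_n | (u != 0) && (herm q u u == 0)]].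

From mathcomp Require Import all_boot all_order all_algebra all_field.
Set Implicit Arguments. Unset Strict Implicit. Unset Printing Implicit Defensive.
Local Open Scope ring_scope.
Import GRing.Theory.

(* Over F_{q^2} the map x |-> x^q is an additive involution (the Frobenius of
   F_{q^2}/F_q).  Expanding both sides gives <u, M^dagger u> = <u, M u>^q, so
   the sets Num_0(M^dagger) and Num'_0(M^dagger) are the images of Num_0(M)
   and Num'_0(M) under this bijection of F. *)

Section HermitianAdjoint.

Variables (F : finFieldType) (q : nat).
Hypothesis exprqD : {morph (fun x : F => x ^+ q) : x y / x + y}.
Hypothesis exprqK : involutive (fun x : F => x ^+ q).

Lemma exprq0 : 0 ^+ q = 0 :> F.
Proof. by apply: (addIr (0 ^+ q)); rewrite -exprqD !add0r. Qed.

Lemma herm_hdag n (M : 'M[F]_n) (u : 'cV_n) :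
  herm q u (hdag q M *m u) = herm q u (M *m u) ^+ q.
Proof.
rewrite /herm (big_morph _ exprqD exprq0).
transitivity (\sum_i \sum_j u j 0 ^+ q * (M i j ^+ q * u i 0)).
  rewrite exchange_big; apply: eq_bigr => j _; rewrite !mxE big_distrr.
  by apply: eq_bigr => i _; rewrite !mxE.
apply: eq_bigr => i _.
rewrite mxE exprMn exprqK (big_morph _ exprqD exprq0) big_distrr.
by apply: eq_bigr => j _; rewrite exprMn mulrCA [RHS]mulrCA [u i 0 * _]mulrC.
Qed.

Lemma card_herm_hdag_imset n (M : 'M[F]_n) (A : {set 'cV_n}) :
  #|[set herm q u (hdag q M *m u) | u in A]| =
  #|[set herm q u (M *m u) | u in A]|.
Proof.
rewrite (eq_imset _ (herm_hdag M)) (imset_comp (fun x => x ^+ q)).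
exact/card_imset/(can_inj exprqK).
Qed.

End HermitianAdjoint.

Section FrobeniusOverFq.

Variables (F : finFieldType) (p k q : nat).
Hypotheses (p_pr : prime p) (q_def : q = (p ^ k)%N) (cardF : #|F| = (q ^ 2)%N).

Lemma exprq_involutive : involutive (fun x : F => x ^+ q).
Proof. by move=> x; rewrite -exprM mulnn -cardF expf_card. Qed.

Lemma exprq_additive : {morph (fun x : F => x ^+ q) : x y / x + y}.
Proof.
have pcharFp : p \in [pchar F].
  by apply: (@card_finPcharP _ p (k * 2)); rewrite // cardF q_def expnM.
move=> x y; apply: exprDn_pchar.
by rewrite q_def (eq_pnat _ (pcharf_eq pcharFp)) pnatX pnat_id ?orbT.
Qed.

End FrobeniusOverFq.

Theorem lemma1 (F : finFieldType) (p k q n : nat)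
  (hp : prime p) (hk : (0 < k)%N) (hq : q = (p ^ k)%N)
  (hF : #|F| = (q ^ 2)%N) (M : 'M[F]_n) :
  #|Num0 q M| = #|Num0 q (hdag q M)| /\
  ((2 <= n)%N -> #|Num0' q M| = #|Num0' q (hdag q M)|).
Proof.
have card_hdag := card_herm_hdag_imset (exprq_additive hp hq hF)
  (exprq_involutive hF) M.
by split=> [|_]; rewrite card_hdag.
Qed.
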